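(* Let $A$ be a $d\times d$ integer matrix of determinant $\pm1$ with $\mathrm{spec}(A)=\{1\}$, and for $k>0$ let $F^{(k)}=P(\mathrm{im}(A^k-I))\subset\mathbb Z^d$. Then $F^{(k)}=F^{(1)}$ for all $k>0$. Consequently, if $\tau$ is a twisted skew product with group component $\mathbb Z^d$ and twisting matrix $A$, then for all $k>0$ the $k$-th iterate of the Fried quotient of $\tau$ equals the Fried quotient of $\tau^k$: $(\tau_{F^{(1)}})^k=(\tau^k)_{F^{(k)}}$.
   Context: A subgroup $\Gamma\subset\mathbb Z^d$ is pure if $\mathbb Z^d/\Gamma$ is torsion-free; the purification $P(X)$ of a subset $X$ is the smallest pure subgroup containing $X$. Twisted skew product: over a countable state Markov shift $(\Sigma,\sigma)$ (bi-infinite sequences allowed by a $\{0,1\}$ transition matrix on a countable state set, $\sigma$ the left shift), $\tau(s,n)=(\sigma s,An+h(s))$ on $\Sigma\times\mathbb Z^d$ with $h$ depending only on $(s_0,s_1)$; $\tau^k$ is a twisted skew product with twisting matrix $A^k$. For an $A$-invariant subgroup $\Gamma$, $\tau_\Gamma(s,n+\Gamma)=(\sigma s,An+h(s)+\Gamma)$. The Fried quotient of a twisted skew product with twisting $\Psi$ is $\tau_F$ with $F=P(\mathrm{im}(\Psi-\mathrm{id}))$. *)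

From HB Require Import structures.
From mathcomp Require Import all_boot all_order all_algebra all_field.
Set Implicit Arguments. Unset Strict Implicit. Unset Printing Implicit Defensive.
Import Order.TTheory GRing.Theory Num.Theory.
Local Open Scope ring_scope.

(* Z^d is represented by integer column vectors 'cV[int]_d; matrices act on
   the left.  Subsets / subgroups of Z^d are Prop-valued predicates. *)
Definition Zd (d : nat) := 'cV[int]_d.

Definition is_subgroup d (G : Zd d -> Prop) : Prop :=
  G 0 /\ (forall x y, G x -> G y -> G (x - y)).

Definition pure d (G : Zd d -> Prop) : Prop :=
  is_subgroup G /\ (forall (m : int) (v : Zd d), m != 0 -> G (m *: v) -> G v).

Definition purification d (X : Zd d -> Prop) : Zd d -> Prop :=
  fun v => forall G, pure G -> (forall x, X x -> G x) -> G v.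

Definition im_mx d (M : 'M[int]_d) : Zd d -> Prop :=
  fun v => exists w : Zd d, v = M *m w.

Definition Fk d (A : 'M[int]_d) (k : nat) : Zd d -> Prop :=
  purification (im_mx (A ^+ k - 1%:M)).

Definition markov (S : countType) (T : S -> S -> bool) (s : int -> S) : Prop :=
  forall i : int, T (s i) (s (i + 1)).

Definition shift (S : Type) (s : int -> S) : int -> S := fun i => s (i + 1).

Record tsp (S : Type) (d : nat) := TSP {
  base : (int -> S) -> (int -> S);
  twist : 'M[int]_d;
  cocycle : (int -> S) -> Zd d }.

Definition tsp_map S d (t : tsp S d) (x : (int -> S) * Zd d) : (int -> S) * Zd d :=
  (base t x.1, twist t *m x.2 + cocycle t x.1).

Definition twisted_sp S d (A : 'M[int]_d) (h : S -> S -> Zd d) : tsp S d :=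
  TSP (@shift S) A (fun s => h (s 0) (s 1)).

Fixpoint tsp_pow S d (t : tsp S d) (k : nat) : tsp S d :=
  match k with
  | 0 => TSP id 1%:M (fun _ => 0)
  | k'.+1 => let u := tsp_pow t k' in
      TSP (fun s => base t (base u s)) (twist t *m twist u)
          (fun s => twist t *m cocycle u s + cocycle t (base u s))
  end.

Definition coset d (G : Zd d -> Prop) (n : Zd d) : Zd d -> Prop :=
  fun m => G (m - n).

Definition quot S d (t : tsp S d) (G : Zd d -> Prop)
    (x : (int -> S) * (Zd d -> Prop)) : (int -> S) * (Zd d -> Prop) :=
  (base t x.1, fun m => exists n, x.2 n /\ G (m - (twist t *m n + cocycle t x.1))).

Definition fried_group S d (t : tsp S d) : Zd d -> Prop :=
  purification (im_mx (twist t - 1%:M)).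

Definition fried_quot S d (t : tsp S d) := quot t (fried_group t).

From HB Require Import structures.
From mathcomp Require Import all_boot all_order all_algebra all_field.
From Stdlib Require Import FunctionalExtensionality PropExtensionality.
Import Order.TTheory GRing.Theory Num.Theory.
Local Open Scope ring_scope.

(* Proof strategy.
   1. Unipotence: if every complex eigenvalue of A is 1, the characteristic
      polynomial of A is ('X - 1)^d, so by Cayley-Hamilton N := A - 1 is
      nilpotent, already over the integers.
   2. Geometric sums: with U_k := \sum_(i < k) A^i we have A^k - 1 = N U_k,
      and U_k = k + N W_k for a polynomial W_k in A.  Since N W_k is
      nilpotent and commutes with k, U_k divides k^e: U_k S = k^e.
   3. Purification: P(X) is the least pure subgroup containing X, so
      P(X) = P(Y) as soon as X lies in P(Y) and Y in P(X).  Now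
      im(A^k - 1) lies in im(A - 1), and k^e im(A - 1) lies in im(A^k - 1),
      so, k^e being nonzero for k > 0, the two purifications agree.
   4. Dynamics: for a subgroup G invariant under the twisting matrix, the
      induced map sends cosets to cosets, hence its k-th iterate is the map
      induced by the k-th iterate of the skew product.  Applied with the
      Fried group, which is A-invariant and, by 3, the same for A and A^k,
      this gives (tau_F)^k = (tau^k)_{F^(k)}. *)

Section GeometricSums.
Context {R : pzRingType}.
Implicit Types (a c x : R).

Definition geom a (k : nat) : R := \sum_(i < k) a ^+ i.

Lemma geom_factor a k : a ^+ k - 1 = (a - 1) * geom a k.
Proof. exact: subrX1. Qed.

Lemma comm_geom a c k : GRing.comm c a -> GRing.comm c (geom a k).
Proof. by move=> ca; apply: commr_sum => i _; apply: commrX. Qed.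

Lemma geom_sub_nat a k :
  geom a k - k%:R = (a - 1) * \sum_(i < k) geom a i.
Proof.
rewrite /geom -[k%:R]mulr1n -[k in 1 *+ k]card_ord -sumr_const -sumrB.
by rewrite mulr_sumr; apply: eq_bigr => i _; rewrite geom_factor.
Qed.

Lemma dvd_pow_add_nilpotent {c x e} :
  GRing.comm c x -> x ^+ e = 0 -> exists s, (c + x) * s = c ^+ e.
Proof.
move=> cx xe; exists (\sum_(i < e) c ^+ (e.-1 - i) * (- x) ^+ i).
rewrite -[x in c + x]opprK -subrXX_comm; last exact/commrN.
by rewrite exprNn xe mulr0 subr0.
Qed.

Lemma geom_dvd_nat a k e :
  (a - 1) ^+ e = 0 -> exists s, geom a k * s = (k ^ e)%:R.
Proof.
move=> nilN; set w := \sum_(i < k) geom a i.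
have cNa : GRing.comm (a - 1) a by apply/commr_sym/commrB; [exact: commr_refl | exact: commr1].
have cNw : GRing.comm (a - 1) w by apply: commr_sum => i _; exact: comm_geom.
have nilNw : ((a - 1) * w) ^+ e = 0 by rewrite exprMn_comm // nilN mul0r.
have [s Hs] := dvd_pow_add_nilpotent (commr_sym (commr_nat _ k)) nilNw.
by exists s; rewrite -geom_sub_nat addrC subrK in Hs; rewrite Hs natrX.
Qed.

End GeometricSums.

Lemma map_intr_mx_eq0 m n (M : 'M[int]_(m, n)) :
  map_mx (intr : int -> algC) M = 0 -> M = 0.
Proof.
move/matrixP=> M0; apply/matrixP => i j.
by move: (M0 i j); rewrite !mxE; move/eqP; rewrite intr_eq0 => /eqP.
Qed.

Lemma unipotent_closed {F : closedFieldType} {n} (B : 'M[F]_n.+1) :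
  (forall l, eigenvalue B l -> l = 1) -> exists e, (B - 1) ^+ e = 0.
Proof.
move=> spec1; have [r Dp] := closed_field_poly_normal (char_poly B).
rewrite (monicP (char_poly_monic B)) scale1r in Dp.
have r1 z : z \in r -> z = 1.
  by move=> zr; apply: spec1; rewrite eigenvalue_root_char Dp root_prod_XsubC.
exists (size r); have := Cayley_Hamilton B; rewrite Dp rmorph_prod /= => <-.
elim: r r1 {Dp} => [|z r IH] r1; first by rewrite big_nil expr0.
rewrite big_cons exprS IH => [|y yr]; last by apply: r1; rewrite inE yr orbT.
by rewrite rmorphB /= horner_mx_X horner_mx_C (r1 z) ?mem_head.
Qed.

Lemma unipotent_int {d} (A : 'M[int]_d) :
  (forall l : algC, eigenvalue (map_mx intr A) l -> l = 1) ->
  exists e, (A - 1) ^+ e = 0.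
Proof.
case: d A => [|n] A spec1; first by exists 0%N; apply/matrixP => -[].
have [e He] := unipotent_closed (map_mx intr A) spec1.
by exists e; apply: map_intr_mx_eq0; rewrite rmorphXn rmorphB rmorph1.
Qed.

Section Purification.
Context {d : nat}.
Implicit Types (G X Y : Zd d -> Prop).

(* Subgroups are closed under addition: x + y = x - (0 - y). *)
Lemma subgroup_add {G x y} : is_subgroup G -> G x -> G y -> G (x + y).
Proof.
move=> [G0 GB] Gx Gy; have := GB x (0 - y) Gx (GB _ _ G0 Gy).
by rewrite sub0r opprK.
Qed.

Lemma purification_pure X : pure (purification X).
Proof.
split; first split.
- by move=> G [[G0 _] _] _.
- by move=> x y Px Py G pG XG; apply: pG.1.2; [apply: Px | apply: Py].
- by move=> m v m0 Pmv G pG XG; apply: (pG.2 m) => //; apply: Pmv.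
Qed.

Lemma purification_ext X x : X x -> purification X x.
Proof. by move=> Xx G _; apply. Qed.

Lemma purification_eq X Y :
  (forall x, X x -> purification Y x) -> (forall y, Y y -> purification X y) ->
  forall v, purification X v <-> purification Y v.
Proof. by move=> XY YX v; split => Pv; apply: Pv => //; apply: purification_pure. Qed.

End Purification.

(* The purification of im(A - 1) is A-invariant, since A v = v + (A - 1) v. *)
Lemma purification_im_invariant {d} (A : 'M[int]_d) k v :
  purification (im_mx (A - 1%:M)) v ->
  purification (im_mx (A - 1%:M)) (A ^+ k *m v).
Proof.
move=> Pv; elim: k => [|k IH]; first by rewrite expr0 mul1mx.
rewrite exprS -mulmxE -mulmxA; set w := A ^+ k *m v.
have -> : A *m w = w + (A - 1%:M) *m w by rewrite mulmxBl mul1mx addrC subrK.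
apply: (subgroup_add (purification_pure _).1 IH).
by apply: purification_ext; exists w.
Qed.

Lemma Fk_stable {d} (A : 'M[int]_d) e k :
  (A - 1) ^+ e = 0 -> (0 < k)%N -> forall v, Fk A k v <-> Fk A 1 v.
Proof.
move=> nilN k0; apply: purification_eq => _ [w ->].
- apply: purification_ext; exists (geom A k *m w).
  by rewrite mulmxA mulmxE -geom_factor.
- have [s Hs] := geom_dvd_nat A k e nilN; set c : int := (k ^ e)%:R.
  have c0 : c != 0 by rewrite pnatr_eq0 expn_eq0 negb_and -lt0n k0.
  apply: ((purification_pure _).2 c _ c0); apply: purification_ext.
  have key : (A ^+ k - 1%:M) *m s = c *: (A - 1%:M).
    by rewrite mulmxE geom_factor -mulrA Hs mulr_natr scaler_nat.
  by exists (s *m w); rewrite expr1 mulmxA key scalemxAl.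
Qed.

Lemma twist_pow S d (t : tsp S d) k : twist (tsp_pow t k) = twist t ^+ k.
Proof. by elim: k => [|k IH] //=; rewrite IH exprS. Qed.

Section InducedMaps.
Context {S : Type} {d : nat} {G : Zd d -> Prop}.
Hypothesis G_sub : is_subgroup G.

Lemma quot_coset (t : tsp S d) s n :
  (forall v, G v -> G (twist t *m v)) ->
  quot t G (s, coset G n) = (base t s, coset G (twist t *m n + cocycle t s)).
Proof.
move=> inv; rewrite /quot /=; congr pair.
apply: functional_extensionality => m; apply: propositional_extensionality.
rewrite /coset; split => [[n' [Gn' Gm]] | Gm].
- have := subgroup_add G_sub Gm (inv _ Gn'); congr G.
  by rewrite mulmxBr !opprD !addrA (addrAC _ (- cocycle t s)) subrK addrAC.
- by exists n; split => //; rewrite subrr; exact: G_sub.1.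
Qed.

Lemma iter_quot (t : tsp S d) k s n :
  (forall v, G v -> G (twist t *m v)) ->
  iter k (quot t G) (s, coset G n) = quot (tsp_pow t k) G (s, coset G n).
Proof.
move=> inv; have invX j v : G v -> G (twist (tsp_pow t j) *m v).
  rewrite twist_pow; elim: j v => [|j IH] v Gv; first by rewrite expr0 mul1mx.
  by rewrite exprS -mulmxE -mulmxA; apply: inv; apply: IH.
rewrite quot_coset; last exact: invX.
elim: k => [|k IH]; first by rewrite /= mul1mx addr0.
by rewrite iterS IH quot_coset //= mulmxDr mulmxA addrA.
Qed.

End InducedMaps.

Theorem mainTheorem12 (d : nat) (A : 'M[int]_d)
  (hdet : \det A = 1 \/ \det A = -1)
  (hspec : forall l : algC, eigenvalue (map_mx intr A) l <-> l = 1) :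
  (forall k : nat, (0 < k)%N -> forall v : Zd d, Fk A k v <-> Fk A 1 v) /\
  (forall (S : countType) (T : S -> S -> bool) (h : S -> S -> Zd d) (k : nat),
     (0 < k)%N ->
     forall (s : int -> S), markov T s -> forall n : Zd d,
       iter k (fried_quot (twisted_sp A h))
              (s, coset (fried_group (twisted_sp A h)) n)
       = fried_quot (tsp_pow (twisted_sp A h) k)
              (s, coset (fried_group (tsp_pow (twisted_sp A h) k)) n)).
Proof.
have [e nilN] := unipotent_int A (fun l => (hspec l).1).
split=> [k k0 v | S T h k k0 s _ n]; first exact: Fk_stable nilN k0 v.
set t := twisted_sp A h.
rewrite /fried_quot; have -> : fried_group (tsp_pow t k) = fried_group t.
  apply: functional_extensionality => v; apply: propositional_extensionality.
  by rewrite /fried_group twist_pow; exact: Fk_stable nilN k0 v.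
have invF v : fried_group t v -> fried_group t (twist t *m v).
  by move/(purification_im_invariant A 1 v); rewrite expr1.
exact: (iter_quot (purification_pure _).1 t k s n invF).
Qed.
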